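(* If $\iota$ is of odd type with patching element $\gamma$, then there exists a root $\delta\in\Lambda$ ($\delta^2=-2$) such that $\delta_{\mathbb K_\gamma}^2=-1$ and $\delta_{\mathbb E_\gamma}^2=-1$, where $\delta=\delta_{\mathbb K_\gamma}+\delta_{\mathbb E_\gamma}$ is the decomposition in $\mathbb K_\gamma^\vee\oplus\mathbb E_\gamma^\vee$.
   Context: $\Lambda=\mathbb U(2)\oplus\mathbb U\oplus\mathbb E_8(2)$ (Enriques lattice). $\iota$ is a fixed-point-free involution of $K_{\tau,\tau'}=\mathrm{Km}(E_\tau\times E_{\tau'})$ with $\mathbf K\subset H^2(K_{\tau,\tau'},\mathbb Z)_-$, $\mathbf K\cong\mathbb U(2)\oplus\mathbb U(2)$ the image of $H^1(E_\tau,\mathbb Z)\otimes H^1(E_{\tau'},\mathbb Z)$; $\alpha$ a marking with $\alpha(H^2_-)=\Lambda$; $\mathbb K_\gamma=\alpha(\mathbf K)$ and $\mathbb E_\gamma$ its orthogonal complement in $\Lambda$ ($\cong\mathbb E_8(2)$). Then $\Lambda=\mathbb Z(d_1+d_2)+\mathbb K_\gamma\oplus\mathbb E_\gamma$ with $d_1\in\mathbb K_\gamma^\vee\setminus\mathbb K_\gamma$, $d_2\in\mathbb E_\gamma^\vee\setminus\mathbb E_\gamma$; the class $\gamma=\bar d_1\in A_{\mathbb K_\gamma}=A_{\mathbf K}$ is the patching element of $\iota$, and $\iota$ is of odd type if $q_{\mathbf K}(\gamma)=1\in\mathbb Z/2$ (i.e. $d_1^2$ is odd), of even type if $q_{\mathbf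 K}(\gamma)=0$. *)

(* Lattice-theoretic formalization of the Enriques lattice
   Lambda = U(2) + U + E8(2) (E8 negative definite), realised as Z^12 inside Q^12
   with the Gram matrix gramL. *)
From mathcomp Require Import all_boot all_order all_algebra.
Set Implicit Arguments.
Unset Strict Implicit.
Unset Printing Implicit Defensive.
Import Order.TTheory GRing.Theory Num.Theory.
Local Open Scope ring_scope.

(* Dynkin diagram of E8 (Bourbaki numbering, 0-indexed):
   0-2, 2-3, 3-4, 4-5, 5-6, 6-7, and 1-3. *)
Definition e8_edge (a b : nat) : bool :=
  ((a, b) \in [:: (0,2); (2,3); (3,4); (4,5); (5,6); (6,7); (1,3)]%N) ||
  ((b, a) \in [:: (0,2); (2,3); (3,4); (4,5); (5,6); (6,7); (1,3)]%N).

Definition e8_entry (a b : nat) : int :=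
  if a == b then (-2)%R else if e8_edge a b then 1 else 0.

Definition gramE8_2 : 'M[int]_8 := \matrix_(i, j) (2 * e8_entry i j).

Definition gramU2U2 : 'M[int]_4 :=
  \matrix_(i, j) (if ((i < 2) && (j < 2))%N || ((2 <= i) && (2 <= j))%N then
                     (if i != j then 2 else 0) else 0).

Definition gram_entry (i j : nat) : int :=
  if ((i < 2) && (j < 2))%N then (if i != j then 2 else 0)
  else if ((2 <= i < 4) && (2 <= j < 4))%N then (if i != j then 1 else 0)
  else if ((4 <= i) && (4 <= j))%N then 2 * e8_entry (i - 4) (j - 4)
  else 0.

Definition gramL : 'M[int]_12 := \matrix_(i, j) gram_entry i j.

Definition intQ (z : int) : rat := z%:~R.

(* Vectors of Lambda (x) Q are row vectors in Q^12. *)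
Notation vecQ := 'rV[rat]_12.

Definition bf (x y : vecQ) : rat := (x *m map_mx intQ gramL *m y^T) 0 0.

Definition inLambda (x : vecQ) : Prop := forall i, x 0 i \is a Num.int.

Definition inZspan n (B : 'M[int]_(n, 12)) (x : vecQ) : Prop :=
  exists c : 'rV[int]_n, x = map_mx intQ (c *m B).
Definition inQspan n (B : 'M[int]_(n, 12)) (x : vecQ) : Prop :=
  exists c : 'rV[rat]_n, x = c *m map_mx intQ B.

Definition inDual n (B : 'M[int]_(n, 12)) (x : vecQ) : Prop :=
  inQspan B x /\ forall y, inZspan B y -> bf x y \is a Num.int.

Definition inOrthLambda n (B : 'M[int]_(n, 12)) (x : vecQ) : Prop :=
  inLambda x /\ forall y, inZspan B y -> bf x y = 0.

(* Odd type: the patching element gamma = class of d1 has q_K(gamma) = 1 in Z/2,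
   i.e. d1^2 is an odd integer. *)
Definition odd_type (d1 : vecQ) : Prop := exists m : int, bf d1 d1 = intQ (2 * m + 1).

(* The Gram matrix of K = U(2) + U(2) is twice a unimodular matrix, so 2 d1 lies
   in K; then 2 d2 = 2 (d1 + d2) - 2 d1 lies in Lambda and is orthogonal to K,
   hence lies in E. Writing d1 = v1 / 2 and d2 = v2 / 2, the norms d1^2 and d2^2
   are the values at v1 and v2 of the even forms x0 x1 + x2 x3 of U + U and
   x^2 / 2 of E8. As Lambda is even and d1 is orthogonal to d2, d1^2 odd forces
   d2^2 odd. In U + U and in E8 every class modulo 2 of odd half-norm contains a
   vector of half-norm -1 (for E8 these are the 120 classes of roots), which is
   checked by computation. So d1 and d2 can be moved by elements of K and E to
   dK and dE with dK^2 = dE^2 = -1, and delta = dK + dE lies in Lambda. *)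
From HB Require Import structures.
From mathcomp Require Import all_boot all_order all_algebra.
From mathcomp Require Import ring lra zify.
Import Order.TTheory GRing.Theory Num.Theory.
Set Implicit Arguments.
Unset Strict Implicit.
Unset Printing Implicit Defensive.
Local Open Scope ring_scope.

HB.instance Definition _ := GRing.RMorphism.copy intQ (intr : int -> rat).

Lemma gram_entry_sym i j : gram_entry i j = gram_entry j i.
Proof.
rewrite /gram_entry (andbC (j < 2)%N) (andbC (2 <= j < 4)%N) (andbC (4 <= j)%N)
  (eq_sym j i) /e8_entry (eq_sym (j - 4)%N) /e8_edge.
by rewrite (orbC (((j - 4)%N, (i - 4)%N) \in _)).
Qed.

Lemma gramL_sym : gramL^T = gramL.
Proof. by apply/matrixP => i j; rewrite !mxE gram_entry_sym. Qed.

Lemma gramL_diag_even i : gramL i i \in dvdz 2.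
Proof. by rewrite mxE /gram_entry /e8_entry !eqxx /=; repeat case: ifP. Qed.

Lemma bfDl x y z : bf (x + y) z = bf x z + bf y z.
Proof. by rewrite /bf !mulmxDl mxE. Qed.

Lemma bfDr x y z : bf x (y + z) = bf x y + bf x z.
Proof. by rewrite /bf linearD /= mulmxDr mxE. Qed.

Lemma bfZl a x y : bf (a *: x) y = a * bf x y.
Proof. by rewrite /bf -!scalemxAl mxE. Qed.

Lemma bfZr a x y : bf x (a *: y) = a * bf x y.
Proof. by rewrite /bf linearZ /= -scalemxAr mxE. Qed.

Lemma bfC x y : bf x y = bf y x.
Proof.
have -> : bf x y = (x *m map_mx intQ gramL *m y^T)^T 0 0 by rewrite mxE.
by rewrite !trmx_mul trmxK map_trmx gramL_sym mulmxA.
Qed.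

Lemma bf_orthD x y : bf x y = 0 -> bf (x + y) (x + y) = bf x x + bf y y.
Proof. by move=> xy0; rewrite !bfDl !bfDr (bfC y x) xy0 addr0 add0r. Qed.

Lemma bf_span m n (B1 : 'M[int]_(m, 12)) (B2 : 'M[int]_(n, 12)) a b :
  bf (a *m map_mx intQ B1) (b *m map_mx intQ B2) =
  (a *m map_mx intQ (B1 *m gramL *m B2^T) *m b^T) 0 0.
Proof. by rewrite /bf !map_mxM trmx_mul map_trmx !mulmxA. Qed.

Lemma bf_Zspan m n (B1 : 'M[int]_(m, 12)) (B2 : 'M[int]_(n, 12)) v w :
  bf (map_mx intQ (v *m B1)) (map_mx intQ (w *m B2)) =
  intQ ((v *m (B1 *m gramL *m B2^T) *m w^T) 0 0).
Proof.
rewrite [RHS](_ : _ = map_mx intQ (v *m (B1 *m gramL *m B2^T) *m w^T) 0 0);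
  last by rewrite [RHS]mxE.
by rewrite !map_mxM bf_span !map_mxM !map_trmx.
Qed.

(* A symmetric matrix with even diagonal is [H + H^T], so [v G v^T = 2 v H v^T]. *)
Definition upper_half n (G : 'M[int]_n) : 'M[int]_n :=
  \matrix_(i, j) if (i < j)%N then G i j else if i == j then divz (G i i) 2 else 0.

Lemma upper_halfK n (G : 'M[int]_n) :
  G^T = G -> (forall i, G i i \in dvdz 2) -> upper_half G + (upper_half G)^T = G.
Proof.
move=> Gsym Gdiag; apply/matrixP => i j; rewrite !mxE.
case: (ltngtP i j) => [ij|ji|/val_inj ->].
- by rewrite -val_eqE /= gtn_eqF // addr0.
- by rewrite -val_eqE /= gtn_eqF // add0r -{1}Gsym mxE.
- (* [G j j] occurs at two convertible but distinct types; lia needs one atom. *)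
  by rewrite eqxx; move/dvdz_mod0P: (Gdiag j); move: (G j j) => g; lia.
Qed.

Lemma form_even n (G : 'M[int]_n) (v : 'rV[int]_n) :
  G^T = G -> (forall i, G i i \in dvdz 2) -> (v *m G *m v^T) 0 0 \in dvdz 2.
Proof.
move=> Gsym Gdiag; apply/dvdzP; exists ((v *m upper_half G *m v^T) 0 0).
have transposed : v *m (upper_half G)^T *m v^T = (v *m upper_half G *m v^T)^T.
  by rewrite !trmx_mul trmxK mulmxA.
by rewrite -{1}(upper_halfK Gsym Gdiag) mulmxDr mulmxDl mxE transposed [_^T 0 0]mxE; ring.
Qed.

Lemma inLambda_map_row x : inLambda x -> exists v : 'rV[int]_12, x = map_mx intQ v.
Proof.
move=> xZ; exists (\row_i Num.floor (x 0 i)).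
apply/rowP => i; rewrite !mxE /intQ.
by have := xZ i; rewrite intrEfloor => /eqP ->.
Qed.

Lemma Lambda_even x : inLambda x -> exists m : int, bf x x = intQ (2 * m).
Proof.
move=> /inLambda_map_row [v ->].
have /dvdzP [m Em] := form_even v gramL_sym gramL_diag_even.
by exists m; rewrite /bf map_trmx -!map_mxM mxE Em mulrC.
Qed.

Lemma inLambdaB x y : inLambda x -> inLambda y -> inLambda (x - y).
Proof. by move=> xZ yZ i; rewrite !mxE rpredB. Qed.

Lemma inLambdaZ (a : int) x : inLambda x -> inLambda (intQ a *: x).
Proof. by move=> xZ i; rewrite !mxE rpredM ?intr_int. Qed.

Lemma Zspan0 n (B : 'M[int]_(n, 12)) : inZspan B 0.
Proof. by exists 0; rewrite mul0mx map_mx0. Qed.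

Lemma Zspan_row n (B : 'M[int]_(n, 12)) i : inZspan B (map_mx intQ (delta_mx 0 i *m B)).
Proof. by exists (delta_mx 0 i). Qed.

Lemma Zspan_inLambda n (B : 'M[int]_(n, 12)) x : inZspan B x -> inLambda x.
Proof. by move=> [v ->] i; rewrite mxE intr_int. Qed.

Lemma inDual_addZspan n (B : 'M[int]_(n, 12)) x k :
  inDual B x -> inZspan B k -> inDual B (x + k).
Proof.
move=> [[c ->] xB] [t ->]; split.
  by exists (c + map_mx intQ t); rewrite mulmxDl map_mxM.
move=> y By; rewrite bfDl rpredD ?xB //.
by case: By => [s ->]; rewrite bf_Zspan intr_int.
Qed.

Lemma dual_scale_Zspan n (B : 'M[int]_(n, 12)) (Gi : 'M[int]_n) (a : int) x :
  (B *m gramL *m B^T) *m Gi = a%:M -> inDual B x -> inZspan B (intQ a *: x).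
Proof.
move=> GGi [[c ->] xB].
have cG_int j : (c *m map_mx intQ (B *m gramL *m B^T)) 0 j \is a Num.int.
  have := xB _ (Zspan_row B j).
  by rewrite map_mxM bf_span map_delta_mx trmx_delta -colE !mxE.
have ac_int j : (intQ a *: c) 0 j \is a Num.int.
  rewrite -mul_mx_scalar -map_scalar_mx -GGi map_mxM mulmxA mxE rpred_sum // => k _.
  by rewrite rpredM ?cG_int // mxE intr_int.
exists (\row_j Num.floor ((intQ a *: c) 0 j)).
rewrite map_mxM scalemxAl; congr (_ *m _); apply/rowP => j; rewrite !mxE.
by have := ac_int j; rewrite intrEfloor mxE => /eqP/esym.
Qed.

Lemma orth_Qspan m n (BK : 'M[int]_(m, 12)) (BE : 'M[int]_(n, 12)) x y :
  (forall z, inZspan BE z -> inOrthLambda BK z) ->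
  inQspan BK x -> inQspan BE y -> bf x y = 0.
Proof.
move=> BE_orth [a ->] [b ->].
rewrite bf_span; suff -> : BK *m gramL *m BE^T = 0 by rewrite map_mx0 mulmx0 mul0mx mxE.
apply/matrixP => i j; rewrite [RHS]mxE.
have [_ /(_ _ (Zspan_row BK i))] := BE_orth _ (Zspan_row BE j).
rewrite bfC bf_Zspan trmx_delta -rowE -colE [col _ _ _ _]mxE [row _ _ _ _]mxE.
by move/eqP; rewrite /intQ intr_eq0 => /eqP.
Qed.

Lemma orth_complement_scale_Zspan m n (BK : 'M[int]_(m, 12)) (BE : 'M[int]_(n, 12))
    (a : int) d1 d2 :
  (forall x, inZspan BE x <-> inOrthLambda BK x) -> inLambda (d1 + d2) ->
  inZspan BK (intQ a *: d1) -> inQspan BE d2 -> inZspan BE (intQ a *: d2).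
Proof.
move=> BE_orth d12_Lambda ad1_K [c Ed2]; apply/BE_orth; split.
  have -> : intQ a *: d2 = intQ a *: (d1 + d2) - intQ a *: d1.
    by rewrite scalerDr addrAC subrr add0r.
  by apply: inLambdaB; [exact: inLambdaZ | exact: Zspan_inLambda ad1_K].
move=> y [t ->]; rewrite bfZl bfC (@orth_Qspan _ _ BK BE) ?mulr0 //.
- by move=> z /BE_orth.
- by exists (map_mx intQ t); rewrite map_mxM.
- by exists c.
Qed.

Lemma odd_type_orth_sum d1 d2 :
  bf d1 d2 = 0 -> inLambda (d1 + d2) -> odd_type d1 -> odd_type d2.
Proof.
move=> d12_orth /Lambda_even [m12 E12] [m1 E1]; exists (m12 - m1 - 1).
by move: E12; rewrite (bf_orthD d12_orth) E1 /intQ !(intrD, intrM, intrN); lra.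
Qed.

Definition form_of_dim n (P : (nat -> int) -> int) : Prop :=
  forall f g, (forall k, (k < n)%N -> f k = g k) -> P f = P g.

Definition parity_invariant (P : (nat -> int) -> int) : Prop :=
  forall f t, P (fun k => f k + 2 * t k) - P f \in dvdz 2.

Fixpoint bitseqs (n : nat) : seq (seq int) :=
  if n is n'.+1 then [seq b :: s | b <- [:: 0; 1], s <- bitseqs n'] else [:: [::]].

Definition odd_classes_lift n (P : (nat -> int) -> int) (roots : seq (seq int)) : bool :=
  all (fun p => (P (nth 0 p) \notin dvdz 2) ==>
         has (fun r => (P (nth 0 r) == -1) &&
                       all (fun k => nth 0 r k - nth 0 p k \in dvdz 2) (iota 0 n)) roots)
      (bitseqs n).

Lemma mem_bitseqs (s : seq int) : all (mem [:: 0; 1]) s -> s \in bitseqs (size s).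
Proof.
elim: s => [|a s IHs] // /andP [a01 /IHs s_bits].
exact: allpairs_f.
Qed.

Lemma odd_form_lift n P roots :
  form_of_dim n P -> parity_invariant P -> odd_classes_lift n P roots ->
  forall f, P f \notin dvdz 2 -> exists t : nat -> int, P (fun k => f k + 2 * t k) = -1.
Proof.
move=> P_dim P_parity P_roots f Pf_odd.
pose p := [seq (f k %% 2)%Z | k <- iota 0 n].
have p_f k : (k < n)%N -> nth 0 p k = (f k %% 2)%Z.
  by move=> kn; rewrite (nth_map 0%N) ?size_iota ?nth_iota.
have p_bits : p \in bitseqs n.
  rewrite -[n in bitseqs n](size_iota 0) -(size_map (fun k => f k %% 2)%Z).
  by apply/mem_bitseqs/allP => _ /mapP [k _ ->]; rewrite !inE; lia.
have p_odd : P (nth 0 p) \notin dvdz 2.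
  have := P_parity (nth 0 p) (fun k => divz (f k) 2).
  rewrite -(P_dim f) => [|k kn]; last by rewrite p_f // [LHS](divz_eq _ 2); lia.
  by move: Pf_odd; lia.
have /hasP [r _ /andP [/eqP Pr r_p]] := implyP (allP P_roots p p_bits) p_odd.
exists (fun k => divz (nth 0 r k - f k) 2).
rewrite -Pr; apply: P_dim => k kn.
have := allP r_p k; rewrite mem_iota add0n p_f // => /(_ kn).
(* [nth 0 r k] occurs at two convertible but distinct types; lia needs one atom. *)
move: (nth 0 r k) => rk; lia.
Qed.

Definition row_fun (R : Type) n (c : 'rV[R]_n.+1) (k : nat) : R := c 0 (inord k).

Lemma row_funE (R : Type) n (c : 'rV[R]_n.+1) (i : 'I_n.+1) : c 0 i = row_fun c i.
Proof. by rewrite /row_fun inord_val. Qed.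

Definition hyp_form (x : nat -> int) : int := x 0%N * x 1%N + x 2%N * x 3%N.

Definition e8_form (x : nat -> int) : int :=
  - (x 0%N ^+ 2 + x 1%N ^+ 2 + x 2%N ^+ 2 + x 3%N ^+ 2
     + x 4%N ^+ 2 + x 5%N ^+ 2 + x 6%N ^+ 2 + x 7%N ^+ 2)
  + x 0%N * x 2%N + x 2%N * x 3%N + x 3%N * x 4%N + x 4%N * x 5%N
  + x 5%N * x 6%N + x 6%N * x 7%N + x 1%N * x 3%N.

Lemma hyp_form_dim : form_of_dim 4 hyp_form.
Proof. by move=> f g fg; rewrite /hyp_form !fg. Qed.

Lemma e8_form_dim : form_of_dim 8 e8_form.
Proof. by move=> f g fg; rewrite /e8_form !fg. Qed.

(* Polarization: [P (f + 2t) - P f = 2 (P (f + t) - P f - P t) + 4 P t]. *)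
Lemma hyp_form_parity : parity_invariant hyp_form.
Proof.
move=> f t; apply/dvdzP.
exists (hyp_form (fun k => f k + t k) - hyp_form f - hyp_form t + 2 * hyp_form t).
by rewrite /hyp_form; ring.
Qed.

Lemma e8_form_parity : parity_invariant e8_form.
Proof.
move=> f t; apply/dvdzP.
exists (e8_form (fun k => f k + t k) - e8_form f - e8_form t + 2 * e8_form t).
by rewrite /e8_form; ring.
Qed.

Definition hyp_roots : seq (seq int) :=
  [:: [:: -1; 1; 0; 0]; [:: -1; 1; 1; 0]; [:: -1; 1; 0; 1];
      [:: 0; 0; -1; 1]; [:: 1; 0; -1; 1]; [:: 0; 1; -1; 1]].

Definition e8_simple_roots : seq (seq int) :=
  [seq [seq (i == j)%:Z | j <- iota 0 8] | i <- iota 0 8].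

Definition raise_e8_roots (rs : seq (seq int)) : seq (seq int) :=
  undup (rs ++ [seq s <- [seq [seq x.1 + x.2 | x <- zip r a] | r <- rs, a <- e8_simple_roots]
                  | e8_form (nth 0 s) == -1]).

(* Every positive root is reached from a simple root by adding simple roots one
   at a time; the highest root of E8 has height 29. *)
Definition e8_positive_roots : seq (seq int) := iter 28 raise_e8_roots e8_simple_roots.

Lemma hyp_roots_lift : odd_classes_lift 4 hyp_form hyp_roots.
Proof. by vm_compute. Qed.

Lemma e8_roots_lift : odd_classes_lift 8 e8_form e8_positive_roots.
Proof. by vm_compute. Qed.

Lemma gramU2U2_form (v : 'rV[int]_4) :
  (v *m gramU2U2 *m v^T) 0 0 = 4 * hyp_form (row_fun v).
Proof.
rewrite !mxE !big_ord_recr !big_ord0 /= !mxE !big_ord_recr !big_ord0 /= !mxE.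
by rewrite !row_funE /hyp_form /=; ring.
Qed.

Lemma gramE8_2_form (v : 'rV[int]_8) :
  (v *m gramE8_2 *m v^T) 0 0 = 4 * e8_form (row_fun v).
Proof.
rewrite !mxE !big_ord_recr !big_ord0 /= !mxE !big_ord_recr !big_ord0 /= !mxE.
by rewrite !row_funE /e8_form /e8_entry /e8_edge /=; ring.
Qed.

Definition gramUU : 'M[int]_4 :=
  \matrix_(i, j) (if ((i < 2) && (j < 2))%N || ((2 <= i) && (2 <= j))%N then
                     (i != j)%:Z else 0).

Lemma gramU2U2_gramUU : gramU2U2 *m gramUU = 2%:M.
Proof.
apply/matrixP => i j; rewrite !mxE !big_ord_recr big_ord0 /= !mxE.
by case: i => [[|[|[|[|//]]]] ?]; case: j => [[|[|[|[|//]]]] ?].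
Qed.

Section OddDualLift.

Variables (n : nat) (B : 'M[int]_(n.+1, 12)) (G : 'M[int]_n.+1).
Variables (P : (nat -> int) -> int) (roots : seq (seq int)).
Hypothesis B_gram : B *m gramL *m B^T = G.
Hypothesis G_form : forall v, (v *m G *m v^T) 0 0 = 4 * P (row_fun v).
Hypotheses (P_dim : form_of_dim n.+1 P) (P_parity : parity_invariant P).
Hypothesis P_roots : odd_classes_lift n.+1 P roots.

Lemma bf_half_Zspan v :
  bf (2^-1 *: map_mx intQ (v *m B)) (2^-1 *: map_mx intQ (v *m B)) = intQ (P (row_fun v)).
Proof. by rewrite bfZl bfZr bf_Zspan B_gram G_form /intQ intrM; field. Qed.

Lemma odd_dual_lift d :
  inZspan B (intQ 2 *: d) -> odd_type d -> exists2 k, inZspan B k & bf (d + k) (d + k) = -1.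
Proof.
move=> [v Ev] [m d_odd].
have Ed : d = 2^-1 *: map_mx intQ (v *m B) by rewrite -Ev scalerA mulVf ?scale1r.
have Pv_odd : P (row_fun v) \notin dvdz 2.
  by move: d_odd; rewrite Ed bf_half_Zspan => /intr_inj ->; lia.
have [t Pt] := odd_form_lift P_dim P_parity P_roots Pv_odd.
pose w := \row_(i < n.+1) t i.
exists (map_mx intQ (w *m B)); first by exists w.
have -> : d + map_mx intQ (w *m B) = 2^-1 *: map_mx intQ ((v + 2 *: w) *m B).
  by rewrite Ed mulmxDl map_mxD scalerDr -scalemxAl map_mxZ scalerA mulVf ?scale1r.
rewrite bf_half_Zspan (@P_dim _ (fun k => row_fun v k + 2 * t k)) ?Pt ?rmorphN1 // => k kn.
by rewrite /row_fun !mxE inordK.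
Qed.

End OddDualLift.

Theorem lemma3p12
  (BK : 'M[int]_(4, 12)) (BE : 'M[int]_(8, 12)) (d1 d2 : 'rV[rat]_12) :
  (* K_gamma = Z-span of BK, isometric to U(2) + U(2) via this basis *)
  BK *m gramL *m BK^T = gramU2U2 ->
  (* E_gamma = orthogonal complement of K_gamma in Lambda, = Z-span of BE,
     isometric to E8(2) via this basis *)
  (forall x, inZspan BE x <-> inOrthLambda BK x) ->
  BE *m gramL *m BE^T = gramE8_2 ->
  (* d1 in K^v \ K, d2 in E^v \ E, Lambda = Z(d1 + d2) + (K + E) *)
  inDual BK d1 -> ~ inZspan BK d1 ->
  inDual BE d2 -> ~ inZspan BE d2 ->
  (forall x, inLambda x <->
     exists (n : int) (k e : 'rV[rat]_12),
       [/\ inZspan BK k, inZspan BE e & x = intQ n *: (d1 + d2) + k + e]) ->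
  (* iota of odd type *)
  odd_type d1 ->
  exists delta : 'rV[rat]_12,
    [/\ inLambda delta, bf delta delta = -2 &
      exists dK dE : 'rV[rat]_12,
        [/\ inDual BK dK, inDual BE dE, delta = dK + dE,
            bf dK dK = -1 & bf dE dE = -1]].
Proof.
move=> GK E_orth GE d1K _ d2E _ Lambda_split d1_odd.
have K_E x y : inQspan BK x -> inQspan BE y -> bf x y = 0.
  by apply: orth_Qspan => z /E_orth.
have d12_Lambda : inLambda (d1 + d2).
  apply/Lambda_split; exists 1, 0, 0.
  by rewrite rmorph1 scale1r !addr0; split => //; apply: Zspan0.
have d1_half : inZspan BK (intQ 2 *: d1).
  by apply: dual_scale_Zspan d1K; rewrite GK; exact: gramU2U2_gramUU.
have d2_half := orth_complement_scale_Zspan E_orth d12_Lambda d1_half d2E.1.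
have d2_odd := odd_type_orth_sum (K_E _ _ d1K.1 d2E.1) d12_Lambda d1_odd.
have [k Kk dK_norm] :=
  odd_dual_lift GK gramU2U2_form hyp_form_dim hyp_form_parity hyp_roots_lift d1_half d1_odd.
have [e Ee dE_norm] :=
  odd_dual_lift GE gramE8_2_form e8_form_dim e8_form_parity e8_roots_lift d2_half d2_odd.
have dK_dual := inDual_addZspan d1K Kk.
have dE_dual := inDual_addZspan d2E Ee.
exists (d1 + k + (d2 + e)); split.
- apply/Lambda_split; exists 1, k, e; split => //.
  by rewrite rmorph1 scale1r addrACA addrA.
- by rewrite (bf_orthD (K_E _ _ dK_dual.1 dE_dual.1)) dK_norm dE_norm; lra.
- by exists (d1 + k), (d2 + e).
Qed.
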